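(* Let $\mathcal{G}$ be a network with non-monitor set $N$ and set of measurement paths $P$, and let $S\subseteq N$ be nonempty. Then $\Omega(S)=\min_{v\in S}\Omega(v)$.
   Context: $\mathcal{G}$ is a finite connected undirected graph whose node set is partitioned into monitors $M$ and non-monitors $N$; $P$ is an arbitrary set of measurement paths (each a sequence of nodes of $\mathcal{G}$). A failure set is any $F\subseteq N$; a path fails iff it traverses a node of $F$. $P_F$ is the set of paths in $P$ traversing at least one node of $F$; $F_1,F_2$ are distinguishable iff $P_{F_1}\ne P_{F_2}$. For $S\subseteq N$ and integer $k\ge0$, $S$ is $k$-identifiable if any two failure sets $F_1,F_2$ with $|F_1|,|F_2|\le k$ and $F_1\cap S\ne F_2\cap S$ are distinguishable. $\Omega(S)$ is the maximum $k\in\{0,\dots,|N|\}$ such that $S$ is $k$-identifiable, and $\Omega(v):=\Omega(\{v\})$. *)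

From mathcomp Require Import all_boot.
From mathcomp Require Import boolp.
Set Implicit Arguments. Unset Strict Implicit. Unset Printing Implicit Defensive.

Section Network.
Variable T : finType.

Definition path_fails (F : {set T}) (p : seq T) : bool := has (mem F) p.

Definition failed_paths (P : seq T -> Prop) (F : {set T}) : seq T -> Prop :=
  fun p => P p /\ path_fails F p.

Definition distinguishable (P : seq T -> Prop) (F1 F2 : {set T}) : Prop :=
  failed_paths P F1 <> failed_paths P F2.

Definition k_identifiable (N : {set T}) (P : seq T -> Prop) (S : {set T}) (k : nat)
  : Prop :=
  forall F1 F2 : {set T}, F1 \subset N -> F2 \subset N ->
    #|F1| <= k -> #|F2| <= k -> F1 :&: S != F2 :&: S ->
    distinguishable P F1 F2.

Definition Omega (N : {set T}) (P : seq T -> Prop) (S : {set T}) : nat :=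
  \max_(k < #|N|.+1 | `[< k_identifiable N P S k >]) k.

End Network.

(* Two failure sets differ on S exactly when they differ on some v in S, so S is
   k-identifiable iff every singleton {v}, v in S, is.  Identifiability is
   downward closed in k and holds for k = 0, so Omega(S) is characterised by
   its lower bounds: k <= Omega(S) iff k <= |N| and S is k-identifiable.  Both
   sides of the identity therefore have the same lower bounds. *)
From mathcomp Require Import all_boot all_order.
From mathcomp Require Import boolp.

Lemma leq_bigminP (I : finType) (A : {pred I}) (F : I -> nat) n k :
  reflect (k <= n /\ forall i, i \in A -> k <= F i)
          (k <= \big[minn/n]_(i in A) F i).
Proof. by rewrite -minEnat; apply: (@Order.TotalTheory.bigmin_geP _ nat I n k (mem A) F). Qed.

Section Identifiability.
Variables (T : finType) (N : {set T}) (P : seq T -> Prop).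

Lemma k_identifiable_le (S : {set T}) j k :
  j <= k -> k_identifiable N P S k -> k_identifiable N P S j.
Proof.
move=> le_jk idk F1 F2 F1N F2N F1j F2j; apply: idk => //.
- exact: leq_trans F1j le_jk.
- exact: leq_trans F2j le_jk.
Qed.

Lemma k_identifiable0 (S : {set T}) : k_identifiable N P S 0.
Proof.
by move=> F1 F2 _ _; rewrite !leqn0 !cards_eq0 => /eqP -> /eqP ->; rewrite eqxx.
Qed.

Lemma setI1_eq (F1 F2 : {set T}) v :
  (F1 :&: [set v] == F2 :&: [set v]) = ((v \in F1) == (v \in F2)).
Proof.
apply/eqP/eqP => [/setP/(_ v)|eqv]; first by rewrite !inE eqxx !andbT.
by apply/setP => x; rewrite !inE; case: eqP => [->|]; rewrite ?andbT ?andbF.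
Qed.

Lemma k_identifiable_points (S : {set T}) k :
  k_identifiable N P S k <-> forall v, v \in S -> k_identifiable N P [set v] k.
Proof.
split=> [idS v vS | idv] F1 F2 F1N F2N F1k F2k neqF.
  apply: idS => //; apply: contra neqF => /eqP /setP /(_ v).
  by rewrite setI1_eq !inE vS !andbT => ->.
have [v] : exists v, (v \in F1 :&: S) != (v \in F2 :&: S).
  apply/existsP; apply: contraR neqF; rewrite negb_exists => /forallP eqF.
  by apply/eqP/setP => x; apply/eqP; rewrite -[_ == _]negbK eqF.
rewrite !inE; case: (boolP (v \in S)) => vS; rewrite ?andbT ?andbF // => neqv.
by apply: (idv v vS) => //; rewrite setI1_eq.
Qed.

Lemma Omega_le_card (S : {set T}) : Omega N P S <= #|N|.
Proof. by apply/bigmax_leqP => i _; rewrite -ltnS. Qed.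

Lemma k_identifiable_Omega (S : {set T}) : k_identifiable N P S (Omega N P S).
Proof.
rewrite /Omega (bigmax_eq_arg ord0); last exact/asboolP/k_identifiable0.
by case: arg_maxnP => [|i /asboolP //]; exact/asboolP/k_identifiable0.
Qed.

Lemma leq_OmegaP (S : {set T}) k :
  k <= Omega N P S <-> k <= #|N| /\ k_identifiable N P S k.
Proof.
split=> [le_k | [le_kN idk]].
  split; first exact: leq_trans le_k (Omega_le_card S).
  exact: k_identifiable_le le_k (k_identifiable_Omega S).
by apply: (@bigmax_sup _ (Ordinal (le_kN : k < #|N|.+1))) => //; exact/asboolP.
Qed.

End Identifiability.

Theorem proposition1 (T : finType) (e : rel T) (M : {set T})
    (P : seq T -> Prop) (S : {set T}) :
  symmetric e ->
  (forall x y : T, connect e x y) ->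
  S \subset ~: M ->
  S != set0 ->
  Omega (~: M) P S = \big[minn/#|~: M|]_(v in S) Omega (~: M) P [set v].
Proof.
move=> _ _ _ _.
set m := \big[minn/_]_(v in S) _.
have lower_bounds k : k <= Omega (~: M) P S <-> k <= m.
  rewrite leq_OmegaP k_identifiable_points; split.
  - move=> [le_kN idk]; apply/leq_bigminP; split=> // v vS.
    by apply/leq_OmegaP; split; last exact: idk.
  - move=> /leq_bigminP [le_kN le_kv]; split=> // v vS.
    by case/leq_OmegaP: (le_kv v vS).
by apply/eqP; rewrite eqn_leq; apply/andP; split; apply/lower_bounds.
Qed.
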